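(* Let $w,z\in A^+$ and let $z_0\in L$ be the first coordinate of $z$ and $w_m\in L$ be the last coordinate of $w$ determined by $L$ (i.e. the first entry of $\mathrm{sc}_L[z]$ and the last entry of $\mathrm{sc}_L[w]$). Then, (a) $\hat{\mathsf f}(wz)=\hat{\mathsf f}(wz_0){\mathsf f}(z_0)^{-1}\hat{\mathsf f}(z)=\hat{\mathsf f}(w){\mathsf f}(w_m)^{-1}\hat{\mathsf f}(w_mz)$; (b) $\check{\mathsf f}(wz)=\check{\mathsf f}(\check{\mathsf f}(w)\check{\mathsf f}(z))$.
   Context: Let $A$ be an alphabet, $A^+$ the free semigroup and $A^*$ the free monoid on $A$. For a word $w=a_1\cdots a_n$ ($a_i\in A$), $w[p,q]=a_p\cdots a_q$, $w_\alpha=w[1,n-1]$ and $w_\omega=w[2,n]$. Let $L\subseteq A^+$ be a non-empty factorial language (closed under non-empty factors) with $A\subseteq L$, and $\ddot L=\{v\in A^+: v\notin L,\ v_\alpha,v_\omega\in L\}$. For $w\in A^+$, the sequence of coordinates $\mathrm{sc}_L[w]=(w_0,\ddot w_1,w_1,\ldots,\ddot w_m,w_m)$ is defined as follows: $m\ge 0$ is the number of occurrences of elements of $\ddot L$ in $w$ (so $m=0$ iff $w\in L$, in which case $\mathrm{sc}_L[w]=(w)$); if $m>0$, $\ddot w_i=w[p_i,q_i]$ ($i=1,\dots,m$) are the successive occurrences of factors of $w$ in $\ddot L$, $w_0=w[1,q_1-1]$, $w_m=w[p_m+1,n]$ and $w_i=w[p_i+1,q_{i+1}-1]$ for $0<i<m$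 (these are the maximal factors of $w$ lying in $L$, in order). Let $G$ be a group with semigroup presentation $\langle A_G\mid R_G\rangle$; words of $A_G^+$ are identified with the elements of $G$ they represent, and by choosing a representative word for each element, $G$ is viewed as a subset of $A_G^+$. Let $X=A\cup A_G$, $L^1=L\cup\{1\}$, and let ${\mathsf f}:L\cup\ddot L\to G$ be a function. Define $\acute{\mathsf f}(1)=\grave{\mathsf f}(1)=1$, $\hat{\mathsf f}(1)=1_G$; for $w\in L$: $\check{\mathsf f}(w)=\acute{\mathsf f}(w)=\grave{\mathsf f}(w)=w$ and $\hat{\mathsf f}(w)={\mathsf f}(w)$; for $w\in A^+\setminus L$ with $\mathrm{sc}_L[w]=(w_0,\ddot w_1,w_1,\ldots,\ddot w_m,w_m)$: $\check{\mathsf f}(w)=w_0{\mathsf f}(\ddot w_1){\mathsf f}(w_1){\mathsf f}(\ddot w_2)\cdots{\mathsf f}(\ddot w_m)w_m$, $\acute{\mathsf f}(w)={\mathsf f}(w_0){\mathsf f}(\ddot w_1){\mathsf f}(w_1)\cdots{\mathsf f}(\ddot w_m)w_m$, $\grave{\mathsf f}(w)=w_0{\mathsf f}(\ddot w_1){\mathsf f}(w_1)\cdots{\mathsf f}(\ddot w_m){\mathsf f}(w_m)$, $\hat{\mathsf f}(w)={\mathsf f}(w_0){\mathsf f}(\ddot w_1){\mathsf f}(w_1)\cdots{\mathsf f}(\ddot w_m){\mathsf f}(w_m)$ (a product in $G$). Then $\check{\mathsf f}$ is extended to $X^+\to L\cup L^1GL^1$ by setting, for $w=u_0g_1u_1\cdots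 g_nu_n\in X^+\setminus A^+$ with $u_0,u_n\in A^*$, $u_1,\ldots,u_{n-1}\in A^+$, $g_1,\ldots,g_n\in A_G^+$: $\check{\mathsf f}(w)=\grave{\mathsf f}(u_0)g_1\hat{\mathsf f}(u_1)\cdots g_{n-1}\hat{\mathsf f}(u_{n-1})g_n\acute{\mathsf f}(u_n)$ (products of consecutive group elements computed in $G$). In (b), $\check{\mathsf f}(w)\check{\mathsf f}(z)$ is a word in $X^+$ and the outer $\check{\mathsf f}$ is this extension. *)

From HB Require Import structures.
From mathcomp Require Import all_boot monoid.
Set Implicit Arguments. Unset Strict Implicit. Unset Printing Implicit Defensive.

(* Conventions (positions are 0-indexed):
   - words of A^* are [seq A]; the empty word 1 is [::];
   - a language L is a boolean predicate on [seq A];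
   - G is an arbitrary (possibly infinite) group ([groupType], mathcomp monoid.v);
   - words of X^+ (X = A u A_G) are modelled as [seq (A + G)]: a letter [inr g]
     stands for a word of A_G^+ representing g (words over A_G are identified
     with the elements of G they represent). *)

Local Open Scope group_scope.

Definition factorial_lang (A : eqType) (L : pred (seq A)) : Prop :=
  [/\ ~~ L [::],
      (exists w, L w),
      (forall u v x, L (u ++ v ++ x) -> v != [::] -> L v) &
      (forall a : A, L [:: a])].

Section Coordinates.
Variables (A : eqType) (G : groupType) (L : pred (seq A)) (f : seq A -> G).

(* the factor w[p..q] (0-indexed, inclusive) *)
Definition factor (w : seq A) (p q : nat) : seq A := take (q.+1 - p) (drop p w).

Definition word_alpha (v : seq A) : seq A := take (size v).-1 v.
Definition word_omega (v : seq A) : seq A := behead v.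

Definition Lddot (v : seq A) : bool :=
  [&& v != [::], ~~ L v, L (word_alpha v) & L (word_omega v)].

Definition occs (w : seq A) : seq (nat * nat) :=
  [seq pq <- [seq (p, q) | p <- iota 0 (size w), q <- iota p (size w - p)]
     | Lddot (factor w pq.1 pq.2)].

(* first and last coordinates w_0 and w_m of sc_L[w] ( = w when w is in L) *)
Definition sc_first (w : seq A) : seq A :=
  if occs w is (p, q) :: _ then take q w else w.
Definition sc_last (w : seq A) : seq A :=
  if occs w is _ :: _ then drop (last (0, 0) (occs w)).1.+1 w else w.

(* f(\ddot w_1) f(w_1) f(\ddot w_2) ... f(w_{m-1}) f(\ddot w_m), computed in G *)
Fixpoint mid_prod (w : seq A) (os : seq (nat * nat)) : G :=
  match os with
  | [::] => 1
  | [:: (p, q)] => f (factor w p q)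
  | (p, q) :: (((p', q') :: _) as os') =>
      f (factor w p q) * f (take (q' - p.+1) (drop p.+1 w)) * mid_prod w os'
  end.

Definition sc_mid (w : seq A) : G := mid_prod w (occs w).

Definition fhat (w : seq A) : G :=
  if w == [::] then 1
  else if L w then f w
  else f (sc_first w) * sc_mid w * f (sc_last w).

Definition fcheckA (w : seq A) : seq (A + G) :=
  if L w then map inl w
  else map inl (sc_first w) ++ inr (sc_mid w) :: map inl (sc_last w).

Definition facute (w : seq A) : seq (A + G) :=
  if w == [::] then [::]
  else if L w then map inl w
  else inr (f (sc_first w) * sc_mid w) :: map inl (sc_last w).

Definition fgrave (w : seq A) : seq (A + G) :=
  if w == [::] then [::]
  else if L w then map inl w
  else rcons (map inl (sc_first w)) (inr (sc_mid w * f (sc_last w))).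

Fixpoint gmerge (x : seq (A + G)) : seq (A + G) :=
  match x with
  | [::] => [::]
  | inl a :: x' => inl a :: gmerge x'
  | inr g :: x' =>
      match gmerge x' with
      | inr h :: y => inr (g * h) :: y
      | y => inr g :: y
      end
  end.

(* letterwise parse: x = u_0 g_1 u_1 ... g_n u_n with g_i single group letters
   and u_i in A^* (possibly empty); a maximal A_G-block of the paper is a run
   of consecutive group letters separated by empty u_i, and since
   \hat f(1) = 1_G, merging reproduces the paper's block products. *)
Fixpoint xparse (x : seq (A + G)) : seq A * seq (G * seq A) :=
  match x with
  | [::] => ([::], [::])
  | inl a :: x' => let: (u, ps) := xparse x' in (a :: u, ps)
  | inr g :: x' => let: (u, ps) := xparse x' in ([::], (g, u) :: ps)
  end.

Fixpoint xbody (ps : seq (G * seq A)) : seq (A + G) :=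
  match ps with
  | [::] => [::]
  | [:: (g, u)] => inr g :: facute u
  | (g, u) :: ps' => inr g :: inr (fhat u) :: xbody ps'
  end.

Definition fcheckX (x : seq (A + G)) : seq (A + G) :=
  match xparse x with
  | (u, [::]) => fcheckA u
  | (u0, ps) => gmerge (fgrave u0 ++ xbody ps)
  end.

End Coordinates.

From HB Require Import structures.
From mathcomp Require Import all_boot monoid zify.
Set Implicit Arguments. Unset Strict Implicit. Unset Printing Implicit Defensive.

(* A factor lying in \ddot L is minimal outside L: all its proper factors are
   in L, so it contains no other factor outside L.  Hence, when [z] is not in
   L, the \ddot L occurrences of [w z] are those of [w z_0] followed by those
   of [z] (shifted by [size w]), and symmetrically, when [w] is not in L, those
   of [w] followed by those of [w_m z].  Both identities in (a) are then
   regroupings of the products defining \hat f, and (b) follows by comparing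
   the two words block by block. *)

Section Concatenation.
Variables (A : eqType) (L : pred (seq A)).
Hypothesis L_fact : factorial_lang L.

Lemma L_infix u v x : L (u ++ v ++ x) -> v != [::] -> L v.
Proof. by case: L_fact => _ _ H _; apply: H. Qed.

Lemma L_letter (a : A) : L [:: a].
Proof. by case: L_fact. Qed.

Lemma notL_catl w z : w != [::] -> ~~ L w -> ~~ L (w ++ z).
Proof.
move=> nw nLw; apply/negP => /(@L_infix [::] _ z)/(_ nw).
by rewrite (negbTE nLw).
Qed.

Lemma notL_catr w z : z != [::] -> ~~ L z -> ~~ L (w ++ z).
Proof.
move=> nz nLz; apply/negP => Lwz.
have /L_infix/(_ nz) : L (w ++ z ++ [::]) by rewrite cats0.
by rewrite (negbTE nLz).
Qed.

Lemma Lddot_notL v : Lddot L v -> ~~ L v.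
Proof. by case/and4P. Qed.

Lemma Lddot_size v : Lddot L v -> 2 <= size v.
Proof.
case/and4P=> /eqP nv nLv _ _; case: v nv nLv => [|a [|b v]] //= _.
by rewrite L_letter.
Qed.

Lemma Lddot_infix_notL x y z :
  Lddot L (x ++ y ++ z) -> y != [::] -> ~~ L y -> x = [::] /\ z = [::].
Proof.
case/and4P=> _ _ Lalpha Lomega ny nLy.
case: x Lomega Lalpha => [|a x] Lomega Lalpha; last first.
  by move: (L_infix Lomega ny); rewrite (negbTE nLy).
split=> //; clear Lomega; case/lastP: z Lalpha => [|z c] //= Lalpha.
rewrite /word_alpha -rcons_cat size_rcons -cats1 take_size_cat // in Lalpha.
by move: (@L_infix [::] _ _ Lalpha ny); rewrite (negbTE nLy).
Qed.

Lemma size_factor (w : seq A) p q : q < size w -> size (factor w p q) = q.+1 - p.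
Proof. by move=> ltqw; rewrite /factor size_takel // size_drop; lia. Qed.

Lemma factor_split (w : seq A) p p' q' q :
  p <= p' -> p' <= q' -> q' <= q -> q < size w ->
  factor w p q = take (p' - p) (drop p w) ++ factor w p' q' ++ take (q - q') (drop q'.+1 w).
Proof.
move=> h1 h2 h3 h4; rewrite /factor.
have -> : q.+1 - p = (p' - p) + ((q'.+1 - p') + (q - q')) by lia.
rewrite takeD takeD !drop_drop.
have -> : p' - p + p = p' by lia.
by have -> : q'.+1 - p' + p' = q'.+1 by lia.
Qed.

Lemma Lddot_factor_notL (w : seq A) p p' q' q :
  p <= p' -> p' <= q' -> q' <= q -> q < size w ->
  Lddot L (factor w p q) -> ~~ L (factor w p' q') -> p = p' /\ q = q'.
Proof.
move=> h1 h2 h3 h4 Hdd nL'; rewrite (factor_split h1 h2 h3 h4) in Hdd.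
have /(Lddot_infix_notL Hdd)/(_ nL') [] : factor w p' q' != [::].
  by rewrite -size_eq0 size_factor; lia.
move=> /(congr1 size) + /(congr1 size).
by rewrite !size_takel ?size_drop /=; lia.
Qed.

Lemma L_factor (w : seq A) p q : L w -> p <= q -> q < size w -> L (factor w p q).
Proof.
move=> Lw lepq ltqw; apply: (@L_infix (take p w) _ (drop q.+1 w)).
  have -> : drop q.+1 w = drop (q.+1 - p) (drop p w).
    by rewrite drop_drop; congr drop; lia.
  by rewrite /factor !cat_take_drop.
by rewrite -size_eq0 size_factor; lia.
Qed.

Lemma take_drop_catl (x y : seq A) i k : i + k <= size x ->
  take k (drop i (x ++ y)) = take k (drop i x).
Proof.
case: k => [|k] H; first by rewrite !take0.
rewrite drop_cat ifT; last by lia.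
rewrite take_cat size_drop; case: ifP => // Hk.
rewrite (_ : k.+1 - (size x - i) = 0); last by lia.
by rewrite take0 cats0 take_oversize // size_drop; lia.
Qed.

Lemma factor_catl (x y : seq A) p q :
  p <= q.+1 -> q < size x -> factor (x ++ y) p q = factor x p q.
Proof. by move=> h1 h2; rewrite /factor take_drop_catl //; lia. Qed.

Lemma factor_catr (x y : seq A) p q :
  factor (x ++ y) (p + size x) (q + size x) = factor y p q.
Proof.
rewrite /factor drop_cat ifF; last by lia.
rewrite (_ : p + size x - size x = p); last by lia.
by rewrite (_ : (q + size x).+1 - (p + size x) = q.+1 - p); last by lia.
Qed.

Definition spans (w : seq A) (ps : seq nat) : seq (nat * nat) :=
  [seq (p, q) | p <- ps, q <- iota p (size w - p)].

Definition occs_from (w : seq A) ps :=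
  [seq pq <- spans w ps | Lddot L (factor w pq.1 pq.2)].

Definition shift_occs n (os : seq (nat * nat)) := [seq (pq.1 + n, pq.2 + n) | pq <- os].

Lemma occsE w : occs L w = occs_from w (iota 0 (size w)).
Proof. by []. Qed.

Lemma mem_spans w ps pq :
  pq \in spans w ps -> [/\ pq.1 \in ps, pq.1 <= pq.2 & pq.2 < size w].
Proof.
elim: ps => [|p ps IH] //; rewrite /spans allpairs_cons mem_cat => /orP [|/IH].
  case/mapP=> q; rewrite mem_iota => /andP [h1 h2] -> /=.
  by rewrite mem_head h1; split=> //; lia.
by case=> h1 h2 h3; rewrite in_cons h1 orbT.
Qed.

Lemma mem_occs_from w ps pq : pq \in occs_from w ps ->
  [/\ pq.1 \in ps, pq.1 <= pq.2, pq.2 < size w & Lddot L (factor w pq.1 pq.2)].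
Proof. by rewrite mem_filter => /andP [Hdd /mem_spans [h1 h2 h3]]. Qed.

Lemma occs_from_mem w ps p q : p \in ps -> p <= q -> q < size w ->
  Lddot L (factor w p q) -> (p, q) \in occs_from w ps.
Proof.
move=> h1 h2 h3 Hdd; rewrite mem_filter Hdd /=.
elim: ps h1 => // p0 ps IH; rewrite in_cons => /orP [/eqP <-|H];
  rewrite /spans allpairs_cons mem_cat; apply/orP; [left|right; exact: IH].
by apply/mapP; exists q => //; rewrite mem_iota; lia.
Qed.

Lemma mem_occs w pq : pq \in occs L w -> pq.1 <= pq.2 < size w.
Proof. by rewrite occsE => /mem_occs_from [_ -> ->]. Qed.

Lemma occs_L w : L w -> occs L w = [::].
Proof.
move=> Lw; case E0: (occs L w) => [|pq os] //.
have: pq \in occs L w by rewrite E0 mem_head.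
by rewrite occsE => /mem_occs_from [_ h1 h2 /Lddot_notL]; rewrite L_factor.
Qed.

(* Induction on the length of the factors: a shortest factor outside L is in
   \ddot L. *)
Lemma occs_nil_L w : w != [::] -> occs L w = [::] -> L w.
Proof.
move=> nw occs0.
have L_factors n p : p + n < size w -> L (factor w p (p + n)).
  elim: n p => [|n IH] p Hp.
    have: size (factor w p (p + 0)) = 1 by rewrite size_factor //; lia.
    by case: (factor w p (p + 0)) => [|a [|]] //= _; apply: L_letter.
  apply/negPn/negP => nLv.
  have Hdd : Lddot L (factor w p (p + n.+1)).
    apply/and4P; split=> //.
    - by rewrite -size_eq0 size_factor //; lia.
    - rewrite /word_alpha size_factor; last lia.
      rewrite /factor take_takel; last lia.
      rewrite (_ : ((p + n.+1).+1 - p).-1 = (p + n).+1 - p); last by lia.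
      by apply: IH; lia.
    - rewrite /word_omega /factor (_ : (p + n.+1).+1 - p = n.+2); last by lia.
      have := IH p.+1 ltac:(lia); rewrite /factor.
      rewrite (_ : (p.+1 + n).+1 - p.+1 = n.+1); last by lia.
      rewrite (_ : p.+1 = 1 + p) // -drop_drop.
      by case: (drop p w) => //= a s; rewrite drop0.
  have: (p, p + n.+1) \in occs L w.
    by rewrite occsE; apply: occs_from_mem Hdd; rewrite ?mem_iota; lia.
  by rewrite occs0.
have := L_factors (size w).-1 0; rewrite /factor drop0 add0n.
have lt0w : 0 < size w by case: (w) nw.
by rewrite (_ : ((size w).-1).+1 - 0 = size w) ?take_size; [apply; lia | lia].
Qed.

Lemma filter_shift_occs n (P P' : pred (nat * nat)) s :
  (forall pq, P (pq.1 + n, pq.2 + n) = P' pq) ->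
  filter P (shift_occs n s) = shift_occs n (filter P' s).
Proof.
by move=> H; elim: s => [|a s IH] //=; rewrite H; case: (P' a) => //=; rewrite IH.
Qed.

Lemma spans_catr (x y : seq A) ps :
  spans (x ++ y) [seq size x + p | p <- ps] = shift_occs (size x) (spans y ps).
Proof.
elim: ps => [|p ps IH] //.
rewrite map_cons /spans !allpairs_cons -!/(spans _ _) IH /shift_occs map_cat.
congr cat; rewrite size_cat (_ : size x + size y - (size x + p) = size y - p); last by lia.
by rewrite iotaDl -!map_comp; apply: eq_map => q /=; rewrite (addnC p) (addnC q).
Qed.

Lemma occs_cat (x y : seq A) :
  occs L (x ++ y) = occs_from (x ++ y) (iota 0 (size x)) ++ shift_occs (size x) (occs L y).
Proof.
rewrite occsE /occs_from {1}size_cat iotaD /spans allpairs_cat filter_cat.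
rewrite -!/(spans _ _); congr cat.
rewrite add0n -(addn0 (size x)) iotaDl addn0 spans_catr.
by apply: filter_shift_occs => pq /=; rewrite factor_catr.
Qed.

Lemma occs_from_catl (x y : seq A) ps :
  (forall p, p \in ps -> p <= size x) ->
  (forall p q, p \in ps -> size x <= q -> q < size x + size y ->
     ~~ Lddot L (factor (x ++ y) p q)) ->
  occs_from (x ++ y) ps = occs_from x ps.
Proof.
elim: ps => [|p ps IH] Hps Hcross //.
rewrite /occs_from /spans !allpairs_cons !filter_cat -!/(spans _ _) -!/(occs_from _ _).
rewrite IH; first last.
- by move=> p' q' Hp'; apply: Hcross; rewrite in_cons Hp' orbT.
- by move=> p' Hp'; apply: Hps; rewrite in_cons Hp' orbT.
congr cat; have lepx := Hps p (mem_head _ _).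
rewrite size_cat (_ : size x + size y - p = (size x - p) + size y); last by lia.
rewrite iotaD map_cat filter_cat (_ : p + (size x - p) = size x); last by lia.
rewrite [X in _ ++ X](eq_in_filter (a2 := pred0)) ?filter_pred0 ?cats0; last first.
  move=> pq /mapP [q]; rewrite mem_iota => /andP [h1 h2] -> /=.
  by apply/negbTE/Hcross; rewrite ?mem_head; lia.
apply: eq_in_filter => pq /mapP [q]; rewrite mem_iota => /andP [h1 h2] -> /=.
by rewrite factor_catl //; lia.
Qed.

Lemma occs_first z p1 q1 os : occs L z = (p1, q1) :: os ->
  [/\ p1 < q1, q1 < size z, Lddot L (factor z p1 q1), L (take q1 z) & take q1 z != [::]].
Proof.
move=> Ez; have: (p1, q1) \in occs L z by rewrite Ez mem_head.
rewrite occsE => /mem_occs_from [_ /= le1 lt1 Hdd].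
have lt_pq : p1 < q1 by move: (Lddot_size Hdd); rewrite size_factor //; lia.
have nz0 : take q1 z != [::] by rewrite -size_eq0 size_takel; lia.
split=> //; apply: occs_nil_L => //.
have Hc := occs_cat (take p1 z) (drop p1 z).
rewrite cat_take_drop size_takel in Hc; last lia.
have before0 : occs_from z (iota 0 p1) = [::].
  case E0: (occs_from z (iota 0 p1)) => [|pq os'] //.
  rewrite Ez E0 in Hc; case: Hc => Hpq _.
  have: pq \in occs_from z (iota 0 p1) by rewrite E0 mem_head.
  by case/mem_occs_from; rewrite -Hpq mem_iota /=; lia.
have Hc2 := occs_cat (take p1 z) (take (q1 - p1) (drop p1 z)).
rewrite -takeD subnKC in Hc2; last lia.
rewrite size_takel in Hc2; last lia.
rewrite Hc2 (@occs_L (take (q1 - p1) (drop p1 z))) ?cats0; last first.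
  case/and4P: Hdd => _ _ + _.
  rewrite /word_alpha size_factor // /factor take_takel; last lia.
  by rewrite (_ : (q1.+1 - p1).-1 = q1 - p1); last lia.
case E1: (occs_from (take q1 z) (iota 0 p1)) => [|[p q] os'] //.
have: (p, q) \in occs_from (take q1 z) (iota 0 p1) by rewrite E1 mem_head.
case/mem_occs_from => /= Hp le_pq; rewrite size_takel; last lia.
move=> lt_q Hdd'; suff: (p, q) \in occs_from z (iota 0 p1) by rewrite before0.
apply: occs_from_mem => //; first lia.
rewrite -(cat_take_drop q1 z) factor_catl //; first lia.
by rewrite size_takel; lia.
Qed.

Lemma occs_last w pq os pm qm : occs L w = pq :: os -> last pq os = (pm, qm) ->
  [/\ pm < qm, qm < size w, Lddot L (factor w pm qm), L (drop pm.+1 w) & drop pm.+1 w != [::]].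
Proof.
move=> Ew Elast; have: (pm, qm) \in occs L w by rewrite Ew -Elast mem_last.
rewrite occsE => /mem_occs_from [_ /= le_pq lt_q Hdd].
have lt_pq : pm < qm by move: (Lddot_size Hdd); rewrite size_factor //; lia.
have nwm : drop pm.+1 w != [::] by rewrite -size_eq0 size_drop; lia.
have Hc := occs_cat (take pm.+1 w) (drop pm.+1 w).
rewrite cat_take_drop size_takel in Hc; last lia.
split=> //; apply: occs_nil_L => //.
case E0: (occs L (drop pm.+1 w)) => [|b bs] //.
have: last (0, 0) (occs L w) = (pm, qm) by rewrite Ew.
by rewrite Hc E0 last_cat /shift_occs map_cons /= last_map => -[] /=; lia.
Qed.

(* A \ddot L factor of [w ++ z] straddling the boundary would contain the first
   \ddot L factor of [z], which is impossible by [Lddot_factor_notL]. *)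
Lemma occs_cat_first w z p1 q1 os : occs L z = (p1, q1) :: os ->
  occs L (w ++ z) = occs L (w ++ take q1 z) ++ shift_occs (size w) (occs L z).
Proof.
move=> Ez; case: (occs_first Ez) => lt_pq lt1 Hdd Lz0 _.
rewrite occs_cat (occs_cat w (take q1 z)) (occs_L Lz0) cats0; congr cat.
rewrite -{1}(cat_take_drop q1 z) catA occs_from_catl //.
  by move=> p; rewrite mem_iota size_cat; lia.
move=> p q; rewrite mem_iota !size_cat size_takel ?size_drop => [Hp h3 h4|]; last lia.
rewrite -catA cat_take_drop; apply/negP => Hdd'.
have := Lddot_factor_notL (p' := p1 + size w) (q' := q1 + size w) _ _ _ _ Hdd'.
rewrite factor_catr (Lddot_notL Hdd) size_cat => /(_ _ _ _ _ isT) []; lia.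
Qed.

Lemma occs_cat_last w z pq os pm qm : occs L w = pq :: os -> last pq os = (pm, qm) ->
  occs L (w ++ z) = occs L w ++ shift_occs pm.+1 (occs L (drop pm.+1 w ++ z)).
Proof.
move=> Ew Elast; case: (occs_last Ew Elast) => lt_pq lt_q Hdd Lwm _.
have Hc := occs_cat (take pm.+1 w) (drop pm.+1 w ++ z).
rewrite catA cat_take_drop size_takel in Hc; last lia.
rewrite Hc; congr cat.
have Hc2 := occs_cat (take pm.+1 w) (drop pm.+1 w).
rewrite cat_take_drop size_takel in Hc2; last lia.
rewrite Hc2 (occs_L Lwm) cats0 occs_from_catl //.
  by move=> p; rewrite mem_iota; lia.
move=> p q; rewrite mem_iota => Hp h3 h4; apply/negP => Hdd'.
have := Lddot_factor_notL (p' := pm) (q' := qm) _ _ _ _ Hdd'.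
rewrite factor_catl // ?(Lddot_notL Hdd) ?size_cat => [/(_ _ _ _ _ isT) []|]; lia.
Qed.

Lemma take_cat_size (x y : seq A) n : take (n + size x) (x ++ y) = x ++ take n y.
Proof. by rewrite take_cat ifF ?addnK //; lia. Qed.

Lemma drop_cat_size (x y : seq A) n k : size x = k -> drop (n + k).+1 (x ++ y) = drop n.+1 y.
Proof. by move=> <-; rewrite drop_cat ifF ?subSn ?addnK //; lia. Qed.

Lemma last_shift_occs n pq s :
  (last (pq.1 + n, pq.2 + n) (shift_occs n s)).1 = (last pq s).1 + n.
Proof. by rewrite /shift_occs (last_map (fun pq => (pq.1 + n, pq.2 + n))). Qed.

Lemma sc_first_L u : L u -> sc_first L u = u.
Proof. by move=> Lu; rewrite /sc_first occs_L. Qed.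

Lemma sc_last_L u : L u -> sc_last L u = u.
Proof. by move=> Lu; rewrite /sc_last occs_L. Qed.

Lemma sc_first_occs u p q os : occs L u = (p, q) :: os -> sc_first L u = take q u.
Proof. by rewrite /sc_first => ->. Qed.

Lemma sc_last_occs u pq os : occs L u = pq :: os -> sc_last L u = drop (last pq os).1.+1 u.
Proof. by rewrite /sc_last => ->. Qed.

Lemma sc_first_last_L u : u != [::] -> ~~ L u ->
  [/\ L (sc_first L u), sc_first L u != [::], L (sc_last L u) & sc_last L u != [::]].
Proof.
move=> nu nLu; case Eu: (occs L u) => [|[p1 q1] os].
  by move: nLu; rewrite occs_nil_L.
case El: (last (p1, q1) os) => [pm qm].
case: (occs_first Eu) => _ _ _ Lf nf; case: (occs_last Eu El) => _ _ _ Ll nl.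
by rewrite (sc_first_occs Eu) (sc_last_occs Eu) El.
Qed.

Lemma L_neq_nil u : L u -> u != [::].
Proof. by case: L_fact => L0 _ _ _; apply: contraTneq => ->. Qed.

Lemma cat_neq_nill (w z : seq A) : w != [::] -> w ++ z != [::].
Proof. by case: w. Qed.

Lemma cat_neq_nilr (w z : seq A) : z != [::] -> w ++ z != [::].
Proof. by case: w => //; case: z. Qed.

Section Products.
Local Open Scope group_scope.
Variables (G : groupType) (f : seq A -> G).

Lemma mid_prod_cons2 w p q p' q' os : mid_prod f w ((p, q) :: (p', q') :: os) =
  f (factor w p q) * f (take (q' - p.+1) (drop p.+1 w)) * mid_prod f w ((p', q') :: os).
Proof. by []. Qed.

Lemma mid_prod_shift (x y : seq A) n os :
  size x = n -> mid_prod f (x ++ y) (shift_occs n os) = mid_prod f y os.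
Proof.
move=> <-; elim: os => [|[p q] os IH] //; case: os IH => [|[p' q'] os] IH.
  by rewrite /= factor_catr.
rewrite /shift_occs map_cons -/(shift_occs _ _) /= in IH *.
rewrite factor_catr IH drop_cat ifF; last lia.
rewrite (_ : (p + size x).+1 - size x = p.+1); last lia.
by rewrite (_ : q' + size x - (p + size x).+1 = q' - p.+1); last lia.
Qed.

Lemma mid_prod_catl (x y : seq A) os : (forall pq, pq \in os -> pq.1 <= pq.2 < size x) ->
  mid_prod f (x ++ y) os = mid_prod f x os.
Proof.
elim: os => [|[p q] os IH] //; case: os IH => [|[p' q'] os] IH Hos.
  have /andP [h1 h2] : p <= q < size x by apply: (Hos (p, q)); rewrite mem_head.
  by rewrite /= factor_catl //; lia.
have /andP [h1 h2] : p <= q < size x by apply: (Hos (p, q)); rewrite mem_head.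
have /andP [h3 h4] : p' <= q' < size x.
  by apply: (Hos (p', q')); rewrite in_cons mem_head orbT.
rewrite !mid_prod_cons2 factor_catl; [|lia|lia].
rewrite take_drop_catl; last lia.
by rewrite IH // => pq Hpq; apply: Hos; rewrite in_cons Hpq orbT.
Qed.

Lemma mid_prod_cat w pq os1 pq' os2 :
  mid_prod f w ((pq :: os1) ++ (pq' :: os2)) =
  mid_prod f w (pq :: os1)
  * f (take (pq'.2 - (last pq os1).1.+1) (drop (last pq os1).1.+1 w))
  * mid_prod f w (pq' :: os2).
Proof.
elim: os1 pq => [|pq1 os1 IH] [p q]; first by case: pq'.
case: pq1 IH => p' q' IH.
rewrite cat_cons -cat_cons [LHS]mid_prod_cons2 IH -mulgA.
by rewrite [in RHS]mid_prod_cons2 !mulgA.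
Qed.

Lemma sc_catr w z : z != [::] -> ~~ L z ->
  sc_last L (w ++ z) = sc_last L z /\
  if L (w ++ sc_first L z)
  then sc_first L (w ++ z) = w ++ sc_first L z /\ sc_mid L f (w ++ z) = sc_mid L f z
  else sc_first L (w ++ z) = sc_first L (w ++ sc_first L z) /\
       sc_mid L f (w ++ z) =
         sc_mid L f (w ++ sc_first L z) * f (sc_last L (w ++ sc_first L z)) * sc_mid L f z.
Proof.
move=> nz nLz; case Ez: (occs L z) => [|[p1 q1] os].
  by move: nLz; rewrite occs_nil_L.
have Hwz := occs_cat_first w Ez.
case: (occs_first Ez) => lt_pq lt_q Hdd Lz0 nz0.
rewrite (sc_first_occs Ez) (sc_last_occs Ez) /sc_mid Ez.
have size_v : size (w ++ take q1 z) = size w + q1 by rewrite size_cat size_takel //; lia.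
have nv : w ++ take q1 z != [::] by move: nz0; rewrite -!size_eq0 size_cat; lia.
have shift_z : shift_occs (size w) ((p1, q1) :: os) =
  (p1 + size w, q1 + size w) :: shift_occs (size w) os by [].
rewrite Ez shift_z in Hwz.
case Ev: (occs L (w ++ take q1 z)) => [|[pb qb] os'] in Hwz *.
  have Lv : L (w ++ take q1 z) by apply: occs_nil_L.
  rewrite cat0s in Hwz; rewrite Lv (sc_first_occs Hwz) (sc_last_occs Hwz) Hwz.
  rewrite (last_shift_occs _ (p1, q1)) (drop_cat_size _ _ erefl) take_cat_size.
  by rewrite -shift_z (mid_prod_shift _ _ erefl).
have nLv : ~~ L (w ++ take q1 z) by apply/negP => /occs_L; rewrite Ev.
have in_v pq : pq \in occs L (w ++ take q1 z) -> pq.1 <= pq.2 < size w + q1.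
  by rewrite -size_v; apply: mem_occs.
have /andP [le_last lt_last] : (last (pb, qb) os').1 <= (last (pb, qb) os').2 < size w + q1.
  by apply: in_v; rewrite Ev mem_last.
rewrite (negbTE nLv) (sc_first_occs Hwz) (sc_last_occs Hwz) Hwz (sc_first_occs Ev).
rewrite (sc_last_occs Ev) last_cat (last_shift_occs _ (p1, q1)) (drop_cat_size _ _ erefl).
have /andP [_ lt_qb] : pb <= qb < size w + q1.
  by apply: (in_v (pb, qb)); rewrite Ev mem_head.
split=> //; split.
  by rewrite -{1}(cat_take_drop q1 z) catA takel_cat // size_v; lia.
rewrite mid_prod_cat -shift_z (mid_prod_shift _ _ erefl) [(_, _).2]/=.
have -> : w ++ z = (w ++ take q1 z) ++ drop q1 z by rewrite -catA cat_take_drop.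
rewrite mid_prod_catl; last by move=> pq Hpq; rewrite size_v; apply: in_v; rewrite Ev.
congr (_ * f _ * _); rewrite take_drop_catl ?size_v; last lia.
by rewrite take_oversize // size_drop size_v; lia.
Qed.

Lemma sc_catl w z : w != [::] -> ~~ L w ->
  sc_first L (w ++ z) = sc_first L w /\
  if L (sc_last L w ++ z)
  then sc_mid L f (w ++ z) = sc_mid L f w /\ sc_last L (w ++ z) = sc_last L w ++ z
  else sc_mid L f (w ++ z) =
         sc_mid L f w * f (sc_first L (sc_last L w ++ z)) * sc_mid L f (sc_last L w ++ z) /\
       sc_last L (w ++ z) = sc_last L (sc_last L w ++ z).
Proof.
move=> nw nLw; case Ew: (occs L w) => [|[p1 q1] os].
  by move: nLw; rewrite occs_nil_L.
case El: (last (p1, q1) os) => [pm qm].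
have Hwz := occs_cat_last z Ew El.
case: (occs_last Ew El) => lt_pq lt_q Hdd Lwm nwm.
have /andP [le1 lt1] : p1 <= q1 < size w by apply: (@mem_occs w (p1, q1)); rewrite Ew mem_head.
rewrite (sc_last_occs Ew) El /= (sc_first_occs Ew) /sc_mid Ew.
have size_u : size (take pm.+1 w) = pm.+1 by rewrite size_takel; lia.
rewrite Ew cat_cons in Hwz.
rewrite (sc_first_occs Hwz) takel_cat; last lia.
have mid_w : mid_prod f (w ++ z) ((p1, q1) :: os) = mid_prod f w ((p1, q1) :: os).
  by rewrite mid_prod_catl // => pq Hpq; apply: mem_occs; rewrite Ew.
split=> //.
case Ev: (occs L (drop pm.+1 w ++ z)) => [|[c1 c2] os'] in Hwz *.
  have Lv : L (drop pm.+1 w ++ z).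
    by apply: occs_nil_L; rewrite // -size_eq0 size_cat size_drop; lia.
  rewrite /= cats0 in Hwz; rewrite Lv.
  by rewrite (sc_last_occs Hwz) Hwz El [(pm, qm).1]/= mid_w drop_cat ifT //; lia.
have nLv : ~~ L (drop pm.+1 w ++ z) by apply/negP => /occs_L; rewrite Ev.
have shift_v : shift_occs pm.+1 ((c1, c2) :: os') =
  (c1 + pm.+1, c2 + pm.+1) :: shift_occs pm.+1 os' by [].
rewrite (negbTE nLv); rewrite shift_v in Hwz.
rewrite (sc_last_occs Hwz) Hwz (sc_first_occs Ev) (sc_last_occs Ev) last_cat.
rewrite (last_shift_occs _ (c1, c2)) mid_prod_cat El -shift_v mid_w.
rewrite [(pm, qm).1]/= [(c1 + _, _).2]/= addnK.
have -> : w ++ z = take pm.+1 w ++ (drop pm.+1 w ++ z) by rewrite catA cat_take_drop.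
by rewrite (mid_prod_shift _ _ size_u) (drop_cat_size _ _ size_u) drop_size_cat.
Qed.

Lemma fhat_L u : L u -> fhat L f u = f u.
Proof. by move=> Lu; rewrite /fhat (negbTE (L_neq_nil Lu)) Lu. Qed.

Lemma fhat_notL u : u != [::] -> ~~ L u ->
  fhat L f u = f (sc_first L u) * sc_mid L f u * f (sc_last L u).
Proof. by move=> nu nLu; rewrite /fhat (negbTE nu) (negbTE nLu). Qed.

Lemma facute_L u : L u -> facute L f u = map inl u.
Proof. by move=> Lu; rewrite /facute (negbTE (L_neq_nil Lu)) Lu. Qed.

Lemma facute_notL u : u != [::] -> ~~ L u ->
  facute L f u = inr (f (sc_first L u) * sc_mid L f u) :: map inl (sc_last L u).
Proof. by move=> nu nLu; rewrite /facute (negbTE nu) (negbTE nLu). Qed.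

Lemma fgrave_L u : L u -> fgrave L f u = map inl u.
Proof. by move=> Lu; rewrite /fgrave (negbTE (L_neq_nil Lu)) Lu. Qed.

Lemma fgrave_notL u : u != [::] -> ~~ L u ->
  fgrave L f u = rcons (map inl (sc_first L u)) (inr (sc_mid L f u * f (sc_last L u))).
Proof. by move=> nu nLu; rewrite /fgrave (negbTE nu) (negbTE nLu). Qed.

Lemma fcheckA_L u : L u -> fcheckA L f u = map inl u.
Proof. by move=> Lu; rewrite /fcheckA Lu. Qed.

Lemma fcheckA_notL u : ~~ L u ->
  fcheckA L f u = map inl (sc_first L u) ++ inr (sc_mid L f u) :: map inl (sc_last L u).
Proof. by move=> nLu; rewrite /fcheckA (negbTE nLu). Qed.

Lemma sc_first_mid_catr w z : z != [::] -> ~~ L z ->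
  f (sc_first L (w ++ z)) * sc_mid L f (w ++ z) = fhat L f (w ++ sc_first L z) * sc_mid L f z.
Proof.
move=> nz nLz; case: (sc_first_last_L nz nLz) => _ nz0 _ _.
case: (sc_catr w nz nLz) => _; case: ifP => Lv [-> ->]; first by rewrite fhat_L.
by rewrite (fhat_notL (cat_neq_nilr _ nz0)) ?Lv // !mulgA.
Qed.

Lemma sc_mid_last_catl w z : w != [::] -> ~~ L w ->
  sc_mid L f (w ++ z) * f (sc_last L (w ++ z)) = sc_mid L f w * fhat L f (sc_last L w ++ z).
Proof.
move=> nw nLw; case: (sc_first_last_L nw nLw) => _ _ _ nwm.
case: (sc_catl z nw nLw) => _; case: ifP => Lv [-> ->]; first by rewrite fhat_L.
by rewrite (fhat_notL (cat_neq_nill _ nwm)) ?Lv // !mulgA.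
Qed.

Lemma fhat_cat_first w z : z != [::] ->
  fhat L f (w ++ z) = fhat L f (w ++ sc_first L z) * (f (sc_first L z))^-1 * fhat L f z.
Proof.
move=> nz; have [Lz|nLz] := boolP (L z); first by rewrite sc_first_L // (fhat_L Lz) mulgVK.
case: (sc_catr w nz nLz) => last_wz _.
rewrite (fhat_notL (cat_neq_nilr _ nz) (notL_catr _ nz nLz)) sc_first_mid_catr //.
by rewrite last_wz (fhat_notL nz nLz) !mulgA mulgVK.
Qed.

Lemma fhat_cat_last w z : w != [::] ->
  fhat L f (w ++ z) = fhat L f w * (f (sc_last L w))^-1 * fhat L f (sc_last L w ++ z).
Proof.
move=> nw; have [Lw|nLw] := boolP (L w); first by rewrite sc_last_L // (fhat_L Lw) mulgV mul1g.
case: (sc_catl z nw nLw) => first_wz _.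
rewrite (fhat_notL (cat_neq_nill _ nw) (notL_catl _ nw nLw)) -mulgA sc_mid_last_catl //.
by rewrite first_wz (fhat_notL nw nLw) !mulgA mulgK.
Qed.

Lemma facute_catr w z : z != [::] -> ~~ L z ->
  facute L f (w ++ z) = inr (fhat L f (w ++ sc_first L z) * sc_mid L f z) :: map inl (sc_last L z).
Proof.
move=> nz nLz; case: (sc_catr w nz nLz) => last_wz _.
by rewrite facute_notL ?cat_neq_nilr ?notL_catr // sc_first_mid_catr // last_wz.
Qed.

Lemma gmerge_map_inl_cat (s : seq A) (x : seq (A + G)) :
  gmerge (map inl s ++ x) = map inl s ++ gmerge x.
Proof. by elim: s => [|a s IH] //=; rewrite IH. Qed.

Lemma gmerge_inr_map_inl (g : G) (s : seq A) : gmerge (inr g :: map inl s) = inr g :: map inl s.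
Proof. by have := gmerge_map_inl_cat s [::]; rewrite !cats0 /= => ->; case: s. Qed.

Lemma gmerge_inr_cons (g h : G) (x y : seq (A + G)) :
  gmerge x = inr h :: y -> gmerge (inr g :: x) = inr (g * h) :: y.
Proof. by move=> /= ->. Qed.

Lemma fcheckA_catr w z : z != [::] -> ~~ L z ->
  fcheckA L f (w ++ z) =
  gmerge (fgrave L f (w ++ sc_first L z) ++ inr (sc_mid L f z) :: map inl (sc_last L z)).
Proof.
move=> nz nLz; case: (sc_first_last_L nz nLz) => _ nz0 _ _.
rewrite fcheckA_notL ?notL_catr //; case: (sc_catr w nz nLz) => ->.
case: ifP => Lv [-> ->]; first by rewrite fgrave_L // gmerge_map_inl_cat gmerge_inr_map_inl.
rewrite fgrave_notL ?cat_neq_nilr ?Lv // cat_rcons gmerge_map_inl_cat.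
by rewrite (gmerge_inr_cons _ (gmerge_inr_map_inl _ _)).
Qed.

Lemma fcheckA_catl w z : w != [::] -> ~~ L w ->
  fcheckA L f (w ++ z) =
  map inl (sc_first L w) ++ gmerge (inr (sc_mid L f w) :: facute L f (sc_last L w ++ z)).
Proof.
move=> nw nLw; case: (sc_first_last_L nw nLw) => _ _ _ nwm.
rewrite fcheckA_notL ?notL_catl //; case: (sc_catl z nw nLw) => -> .
case: ifP => Lv [-> ->]; first by rewrite facute_L // gmerge_inr_map_inl.
rewrite facute_notL ?cat_neq_nill ?Lv //.
by rewrite (gmerge_inr_cons _ (gmerge_inr_map_inl _ _)) !mulgA.
Qed.

Lemma xparse_map_inl_cat (s : seq A) (x : seq (A + G)) :
  xparse (map inl s ++ x) = let: (u, ps) := xparse x in (s ++ u, ps).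
Proof. by elim: s => [|a s /= ->]; case: (xparse x). Qed.

Lemma xparse_map_inl (s : seq A) : xparse (map inl s : seq (A + G)) = (s, [::]).
Proof. by have := xparse_map_inl_cat s [::]; rewrite cats0 /= cats0. Qed.

Lemma fcheckX_map_inl (s : seq A) : fcheckX L f (map inl s) = fcheckA L f s.
Proof. by rewrite /fcheckX xparse_map_inl. Qed.

Lemma fcheckX_one_block (u0 : seq A) (g : G) (u : seq A) :
  fcheckX L f (map inl u0 ++ inr g :: map inl u) =
  gmerge (fgrave L f u0 ++ inr g :: facute L f u).
Proof. by rewrite /fcheckX xparse_map_inl_cat /= xparse_map_inl cats0. Qed.

Lemma fcheckX_two_blocks (u0 : seq A) (g : G) (u : seq A) (h : G) (v : seq A) :
  fcheckX L f (map inl u0 ++ inr g :: map inl u ++ inr h :: map inl v) =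
  gmerge (fgrave L f u0 ++ inr g :: inr (fhat L f u) :: inr h :: facute L f v).
Proof.
by rewrite /fcheckX xparse_map_inl_cat /= xparse_map_inl_cat /= xparse_map_inl !cats0.
Qed.

Lemma fcheckA_cat w z : w != [::] -> z != [::] ->
  fcheckA L f (w ++ z) = fcheckX L f (fcheckA L f w ++ fcheckA L f z).
Proof.
move=> nw nz; have [Lw|nLw] := boolP (L w); have [Lz|nLz] := boolP (L z).
- by rewrite (fcheckA_L Lw) (fcheckA_L Lz) -map_cat fcheckX_map_inl.
- case: (sc_first_last_L nz nLz) => _ _ Lzm _.
  rewrite (fcheckA_L Lw) (fcheckA_notL nLz) catA -map_cat fcheckX_one_block.
  by rewrite facute_L // fcheckA_catr.
- case: (sc_first_last_L nw nLw) => Lw0 _ _ _.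
  rewrite (fcheckA_notL nLw) (fcheckA_L Lz) -catA cat_cons -map_cat fcheckX_one_block.
  by rewrite fgrave_L // gmerge_map_inl_cat fcheckA_catl.
case: (sc_first_last_L nw nLw) => Lw0 _ _ _; case: (sc_first_last_L nz nLz) => _ _ Lzm _.
rewrite (fcheckA_notL nLw) (fcheckA_notL nLz) -catA cat_cons catA -map_cat.
rewrite fcheckX_two_blocks fgrave_L // facute_L // gmerge_map_inl_cat fcheckA_catl //.
rewrite facute_catr // !(gmerge_inr_cons _ (gmerge_inr_map_inl _ _)).
by rewrite (gmerge_inr_cons _ (gmerge_inr_cons _ (gmerge_inr_map_inl _ _))) mulgA.
Qed.

End Products.
End Concatenation.

Unset Implicit Arguments.
Local Open Scope group_scope.

Theorem lemma1 (A : eqType) (G : groupType) (L : pred (seq A))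
  (f : seq A -> G) (w z : seq A) :
  factorial_lang L -> w != [::] -> z != [::] ->
  (fhat L f (w ++ z)
     = fhat L f (w ++ sc_first L z) * (f (sc_first L z))^-1 * fhat L f z
   /\ fhat L f (w ++ z)
     = fhat L f w * (f (sc_last L w))^-1 * fhat L f (sc_last L w ++ z))
  /\ fcheckA L f (w ++ z) = fcheckX L f (fcheckA L f w ++ fcheckA L f z).
Proof.
move=> L_fact nw nz; split; first split.
- exact: fhat_cat_first.
- exact: fhat_cat_last.
- exact: fcheckA_cat.
Qed.
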